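(* Let $a,b>0$ with $a\ne b$, and $\nu\in(0,\tfrac12)\cup(\tfrac12,1)$. Let $r=\min\{\nu,1-\nu\}$, $R=\max\{\nu,1-\nu\}$, and $$\alpha_\nu(a,b):=\left(\frac{a^{a/\nu}}{b^{b/(1-\nu)}}\cdot\frac{(a\nabla_\nu b)^{\frac{a\nabla_\nu b}{\nu(1-\nu)(2\nu-1)}}}{\big(\frac{a+b}{2}\big)^{\frac{2(a+b)}{2\nu-1}}}\right)^{\frac{1}{b-a}}.$$ Then $\alpha_\nu(a,b)\ge1$, $$\alpha_\nu(a,b)^{r}\,K(a,b)^{\widetilde r(\nu)}\le\frac{a\nabla_\nu b}{a\sharp_\nu b}\le \alpha_\nu(a,b)^{R}\,K(a,b)^{\widetilde R(\nu)},$$ and $$I_\nu(a,b)\le\frac1e\left(\frac{a^a}{b^b}\cdot\frac{\big(\frac{a+b}{2}\big)^{\frac{2(a+b)}{1-2\nu}}}{(a\nabla_\nu b)^{\frac{4(a\nabla_\nu b)}{1-2\nu}}}\right)^{\frac{1}{b-a}}.$$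
   Context: $a\nabla_\nu b:=(1-\nu)a+\nu b$, $a\sharp_\nu b:=a^{1-\nu}b^\nu$. Kantorovich constant: $K(a,b):=\frac{(a+b)^2}{4ab}$. Weighted identric mean: $$I_\nu(a,b):=\frac1e\,\big(a\nabla_\nu b\big)^{\frac{(1-2\nu)(a\nabla_\nu b)}{\nu(1-\nu)(b-a)}}\left(\frac{b^{\frac{\nu b}{1-\nu}}}{a^{\frac{(1-\nu)a}{\nu}}}\right)^{\frac{1}{b-a}}.$$ For $\lambda\in[0,1]$ let $r_1(\lambda)=\min\{\nu\lambda,1-\nu\lambda\}$, $r_2(\lambda)=\min\{(1-\nu)\lambda,1-(1-\nu)\lambda\}$, $R_1(\lambda)=\max\{\nu\lambda,1-\nu\lambda\}$, $R_2(\lambda)=\max\{(1-\nu)\lambda,1-(1-\nu)\lambda\}$, and $\widetilde r(\nu):=\int_0^1((1-\nu)r_1(\lambda)+\nu r_2(\lambda))d\lambda$, $\widetilde R(\nu):=\int_0^1((1-\nu)R_1(\lambda)+\nu R_2(\lambda))d\lambda$. *)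

From Stdlib Require Import Reals.
From Coquelicot Require Import Coquelicot.
Open Scope R_scope.

Definition wam (nu a b : R) : R := (1 - nu) * a + nu * b.
Definition wgm (nu a b : R) : R := Rpower a (1 - nu) * Rpower b nu.
Definition Kant (a b : R) : R := (a + b) ^ 2 / (4 * a * b).

Definition identric (nu a b : R) : R :=
  / exp 1 * Rpower (wam nu a b)
                   ((1 - 2 * nu) * wam nu a b / (nu * (1 - nu) * (b - a)))
  * Rpower (Rpower b (nu * b / (1 - nu)) / Rpower a ((1 - nu) * a / nu))
           (1 / (b - a)).

Definition r1 (nu l : R) : R := Rmin (nu * l) (1 - nu * l).
Definition r2 (nu l : R) : R := Rmin ((1 - nu) * l) (1 - (1 - nu) * l).
Definition R1 (nu l : R) : R := Rmax (nu * l) (1 - nu * l).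
Definition R2 (nu l : R) : R := Rmax ((1 - nu) * l) (1 - (1 - nu) * l).

Definition rtilde (nu : R) : R :=
  RInt (fun l => (1 - nu) * r1 nu l + nu * r2 nu l) 0 1.
Definition Rtilde (nu : R) : R :=
  RInt (fun l => (1 - nu) * R1 nu l + nu * R2 nu l) 0 1.

Definition alpha (nu a b : R) : R :=
  Rpower
    (Rpower a (a / nu) / Rpower b (b / (1 - nu))
     * (Rpower (wam nu a b) (wam nu a b / (nu * (1 - nu) * (2 * nu - 1)))
        / Rpower ((a + b) / 2) (2 * (a + b) / (2 * nu - 1))))
    (1 / (b - a)).

From Pilot Require Import Defs.
From Stdlib Require Import Reals Lra Psatz.
From Coquelicot Require Import Coquelicot.
Open Scope R_scope.

(* Write u(s) = a + s (b - a).  The weight (b - a)^2 / u(s)^2 = - (ln u)''(s) is positive on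
   [0, 1], so integrating it against a nonnegative kernel gives a nonnegative number.  For
   ν < 1/2 the logarithms of α_ν(a,b), of (a∇_ν b)/(a♯_ν b) and of K(a,b) are integrals of this
   weight against explicit kernels, quadratic on [0,ν], [ν,1/2] and [1/2,1] (for the last two, the
   Green's functions of interpolation at ν and, doubled, at 1/2), evaluated through an explicit
   antiderivative.  With r̃(ν) = ν(3-4ν)/(4(1-ν)) and R̃(ν) = 1 - r̃(ν), both halves of the
   two-sided bound become pointwise nonnegativity of a combination of these kernels, certified
   on each piece; ν > 1/2 follows by exchanging a and b.  Finally I_ν(a,b) α_ν(a,b) is exactly
   the stated bound on the identric mean, and α_ν(a,b) >= 1. *)

Record quad := Quad { q0 : R; q1 : R; q2 : R }.

Definition qeval (p : quad) (s : R) : R := q0 p + q1 p * s + q2 p * s ^ 2.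

Definition qcomb3 (x : R) (p : quad) (y : R) (q : quad) (z : R) (w : quad) : quad :=
  Quad (x * q0 p + y * q0 q + z * q0 w) (x * q1 p + y * q1 q + z * q1 w)
       (x * q2 p + y * q2 q + z * q2 w).

Lemma qeval_comb3 x p y q z w s :
  qeval (qcomb3 x p y q z w) s = x * qeval p s + y * qeval q s + z * qeval w s.
Proof. unfold qeval; simpl; ring. Qed.

Lemma qeval_nonneg_cert p s0 s1 c_r c_l c_m c_ll c_rr :
  0 <= c_r -> 0 <= c_l -> 0 <= c_m -> 0 <= c_ll -> 0 <= c_rr ->
  (forall s, qeval p s = c_r * (s1 - s) + c_l * (s - s0) + c_m * ((s - s0) * (s1 - s))
                         + c_ll * (s - s0) ^ 2 + c_rr * (s1 - s) ^ 2) ->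
  forall s, s0 <= s <= s1 -> 0 <= qeval p s.
Proof.
  intros Hr Hl Hm Hll Hrr Hcert s Hs; rewrite Hcert.
  assert (0 <= c_m * ((s - s0) * (s1 - s))) by (apply Rmult_le_pos; nra).
  assert (0 <= c_ll * (s - s0) ^ 2) by (apply Rmult_le_pos; nra).
  assert (0 <= c_rr * (s1 - s) ^ 2) by (apply Rmult_le_pos; nra).
  nra.
Qed.

Definition lerp (a b s : R) : R := a + s * (b - a).

Lemma lerp_pos a b s : 0 < a -> 0 < b -> 0 <= s <= 1 -> 0 < lerp a b s.
Proof. intros; unfold lerp; nra. Qed.

Section Antiderivative.

Variables a b : R.
Hypotheses (Ha : 0 < a) (Hb : 0 < b) (Hab : a <> b).

Definition antideriv (p : quad) (s : R) : R :=
  - qeval p s * (b - a) / lerp a b s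
  + (q1 p + 2 * q2 p * s) * ln (lerp a b s)
  - 2 * q2 p * (lerp a b s * ln (lerp a b s) - lerp a b s) / (b - a).

Lemma is_derive_antideriv p s : 0 <= s <= 1 ->
  is_derive (antideriv p) s (qeval p s * (b - a) ^ 2 / lerp a b s ^ 2).
Proof.
  intros Hs; pose proof (lerp_pos a b s Ha Hb Hs).
  assert (b - a <> 0) by lra.
  unfold antideriv, qeval, lerp in *; auto_derive.
  - repeat split; lra.
  - field; lra.
Qed.

Lemma antideriv_le p s0 s1 : 0 <= s0 -> s0 <= s1 -> s1 <= 1 ->
  (forall s, s0 <= s <= s1 -> 0 <= qeval p s) -> antideriv p s0 <= antideriv p s1.
Proof.
  intros H0 H01 H1 Hp.
  destruct (MVT_gen (antideriv p) s0 s1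
              (fun s => qeval p s * (b - a) ^ 2 / lerp a b s ^ 2)) as [c [Hc Hmvt]];
    rewrite ?Rmin_left, ?Rmax_right in * by lra.
  - intros x Hx; apply is_derive_antideriv; lra.
  - intros x Hx; apply continuity_pt_filterlim,
      (@ex_derive_continuous R_AbsRing R_NormedModule).
    eexists; apply is_derive_antideriv; lra.
  - assert (0 < lerp a b c) by (apply lerp_pos; lra).
    assert (0 <= qeval p c * (b - a) ^ 2 / lerp a b c ^ 2).
    { apply Rmult_le_pos; [apply Rmult_le_pos; [apply Hp; lra | apply pow2_ge_0]|].
      apply Rlt_le, Rinv_0_lt_compat, pow_lt; lra. }
    nra.
Qed.

Lemma antideriv_comb3 x p y q z w s :
  antideriv (qcomb3 x p y q z w) s = x * antideriv p s + y * antideriv q s + z * antideriv w s.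
Proof. unfold antideriv; rewrite qeval_comb3; simpl; unfold Rdiv; ring. Qed.

End Antiderivative.

(* A piecewise quadratic on [0, ν], [ν, 1/2], [1/2, 1]; [kint a b ν K] is its integral against
   the weight (b - a)^2 / lerp a b s ^ 2 over [0, 1]. *)
Record kernel := Kernel { kl : quad; km : quad; kr : quad }.

Definition kcomb3 (x : R) (K : kernel) (y : R) (L : kernel) (z : R) (M : kernel) :=
  Kernel (qcomb3 x (kl K) y (kl L) z (kl M)) (qcomb3 x (km K) y (km L) z (km M))
         (qcomb3 x (kr K) y (kr L) z (kr M)).

Definition kint (a b nu : R) (K : kernel) : R :=
  antideriv a b (kl K) nu - antideriv a b (kl K) 0
  + (antideriv a b (km K) (1 / 2) - antideriv a b (km K) nu)
  + (antideriv a b (kr K) 1 - antideriv a b (kr K) (1 / 2)).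

Lemma kint_comb3 a b nu x K y L z M :
  kint a b nu (kcomb3 x K y L z M) = x * kint a b nu K + y * kint a b nu L + z * kint a b nu M.
Proof. unfold kint, kcomb3; simpl; rewrite !antideriv_comb3; ring. Qed.

Lemma kint_nonneg a b nu K : 0 < a -> 0 < b -> a <> b -> 0 < nu < 1 / 2 ->
  (forall s, 0 <= s <= nu -> 0 <= qeval (kl K) s) ->
  (forall s, nu <= s <= 1 / 2 -> 0 <= qeval (km K) s) ->
  (forall s, 1 / 2 <= s <= 1 -> 0 <= qeval (kr K) s) ->
  0 <= kint a b nu K.
Proof.
  intros Ha Hb Hab Hnu Hl Hm Hr; unfold kint.
  pose proof (antideriv_le a b Ha Hb Hab (kl K) 0 nu ltac:(lra) ltac:(lra) ltac:(lra) Hl).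
  pose proof (antideriv_le a b Ha Hb Hab (km K) nu (1 / 2) ltac:(lra) ltac:(lra) ltac:(lra) Hm).
  pose proof (antideriv_le a b Ha Hb Hab (kr K) (1 / 2) 1 ltac:(lra) ltac:(lra) ltac:(lra) Hr).
  lra.
Qed.

Definition green_kernel (nu : R) : kernel :=
  Kernel (Quad 0 (1 - nu) 0) (Quad nu (- nu) 0) (Quad nu (- nu) 0).

Definition kant_kernel : kernel :=
  Kernel (Quad 0 1 0) (Quad 0 1 0) (Quad 1 (- 1) 0).

Definition alpha_mid_curv (nu : R) : R := (3 - 2 * nu) / ((1 - nu) * (1 - 2 * nu)).

Definition alpha_kernel (nu : R) : kernel :=
  Kernel (Quad 0 0 (1 / (2 * nu)))
         (Quad (- nu / 2 - alpha_mid_curv nu * nu ^ 2 / 2) (1 + alpha_mid_curv nu * nu)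
               (- alpha_mid_curv nu / 2))
         (Quad (1 / (2 * (1 - nu))) (- 1 / (1 - nu)) (1 / (2 * (1 - nu)))).

Definition ln_alpha (nu a b : R) : R :=
  (a / nu * ln a - b / (1 - nu) * ln b
   + wam nu a b / (nu * (1 - nu) * (2 * nu - 1)) * ln (wam nu a b)
   - 2 * (a + b) / (2 * nu - 1) * ln ((a + b) / 2)) / (b - a).

Definition ln_mean_ratio (nu a b : R) : R := ln (wam nu a b) - (1 - nu) * ln a - nu * ln b.

Definition ln_Kant (a b : R) : R := 2 * ln ((a + b) / 2) - ln a - ln b.

Lemma wam_pos nu a b : 0 < a -> 0 < b -> 0 < nu < 1 -> 0 < wam nu a b.
Proof. intros; unfold wam; nra. Qed.

Lemma kint_closed_form a b nu K : kint a b nu K =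
  let ev p s u := - qeval p s * (b - a) / u + (q1 p + 2 * q2 p * s) * ln u
                  - 2 * q2 p * (u * ln u - u) / (b - a) in
  ev (kl K) nu (wam nu a b) - ev (kl K) 0 a
  + (ev (km K) (1 / 2) ((a + b) / 2) - ev (km K) nu (wam nu a b))
  + (ev (kr K) 1 b - ev (kr K) (1 / 2) ((a + b) / 2)).
Proof.
  unfold kint, antideriv.
  replace (lerp a b nu) with (wam nu a b) by (unfold lerp, wam; ring).
  replace (lerp a b 0) with a by (unfold lerp; ring).
  replace (lerp a b (1 / 2)) with ((a + b) / 2) by (unfold lerp; field).
  replace (lerp a b 1) with b by (unfold lerp; ring).
  reflexivity.
Qed.

Lemma ln_mean_ratio_kint nu a b : 0 < a -> 0 < b -> a <> b -> 0 < nu < 1 ->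
  ln_mean_ratio nu a b = kint a b nu (green_kernel nu).
Proof.
  intros Ha Hb Hab Hnu; pose proof (wam_pos nu a b Ha Hb Hnu).
  rewrite kint_closed_form; unfold ln_mean_ratio, qeval; simpl.
  field; lra.
Qed.

Lemma ln_Kant_kint nu a b : 0 < a -> 0 < b -> a <> b -> 0 < nu < 1 ->
  ln_Kant a b = kint a b nu kant_kernel.
Proof.
  intros Ha Hb Hab Hnu; pose proof (wam_pos nu a b Ha Hb Hnu).
  rewrite kint_closed_form; unfold ln_Kant, qeval; simpl.
  field; lra.
Qed.

Lemma ln_alpha_kint nu a b : 0 < a -> 0 < b -> a <> b -> 0 < nu < 1 -> nu <> 1 / 2 ->
  ln_alpha nu a b = kint a b nu (alpha_kernel nu).
Proof.
  intros Ha Hb Hab Hnu Hh; pose proof (wam_pos nu a b Ha Hb Hnu).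
  rewrite kint_closed_form; unfold qeval; simpl; unfold ln_alpha, alpha_mid_curv.
  unfold wam in *; field; repeat split; lra.
Qed.

Definition rtilde_closed (nu : R) : R := nu * (3 - 4 * nu) / (4 * (1 - nu)).

Definition lower_gap_kernel (nu : R) : kernel :=
  kcomb3 1 (green_kernel nu) (- nu) (alpha_kernel nu) (- rtilde_closed nu) kant_kernel.

Definition upper_gap_kernel (nu : R) : kernel :=
  kcomb3 (1 - nu) (alpha_kernel nu) (1 - rtilde_closed nu) kant_kernel (-1) (green_kernel nu).

Section KernelPositivity.

Variable nu : R.
Hypothesis Hnu : 0 < nu < 1 / 2.

Let rtilde_closed_eq : rtilde_closed nu = nu - nu / (4 * (1 - nu)).
Proof. unfold rtilde_closed; field; lra. Qed.

Let quarter_pos : 0 < nu / (4 * (1 - nu)).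
Proof. apply Rdiv_pos_pos; lra. Qed.

Ltac cert_identity :=
  intro s; unfold qeval; simpl; unfold alpha_mid_curv, rtilde_closed; field; lra.

Ltac cert_coeff := apply Rle_mult_inv_pos || apply Rmult_le_pos || lra || nra.

Lemma alpha_kernel_nonneg :
  (forall s, 0 <= s <= nu -> 0 <= qeval (kl (alpha_kernel nu)) s) /\
  (forall s, nu <= s <= 1 / 2 -> 0 <= qeval (km (alpha_kernel nu)) s) /\
  (forall s, 1 / 2 <= s <= 1 -> 0 <= qeval (kr (alpha_kernel nu)) s).
Proof.
  split; [|split].
  - apply (qeval_nonneg_cert _ 0 nu 0 0 0 (1 / (2 * nu)) 0); repeat cert_coeff.
    cert_identity.
  - apply (qeval_nonneg_cert _ nu (1 / 2) (nu / (1 - 2 * nu))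
             (1 / (4 * (1 - nu) * (1 - 2 * nu))) (alpha_mid_curv nu / 2) 0 0); repeat cert_coeff.
    cert_identity.
  - apply (qeval_nonneg_cert _ (1 / 2) 1 0 0 0 0 (1 / (2 * (1 - nu)))); repeat cert_coeff.
    cert_identity.
Qed.

Lemma lower_gap_kernel_nonneg :
  (forall s, 0 <= s <= nu -> 0 <= qeval (kl (lower_gap_kernel nu)) s) /\
  (forall s, nu <= s <= 1 / 2 -> 0 <= qeval (km (lower_gap_kernel nu)) s) /\
  (forall s, 1 / 2 <= s <= 1 -> 0 <= qeval (kr (lower_gap_kernel nu)) s).
Proof.
  split; [|split].
  - apply (qeval_nonneg_cert _ 0 nu 0 ((1 - 2 * nu) * (4 - 5 * nu) / (4 * (1 - nu)))
             (1 / 2) 0 0); repeat cert_coeff.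
    cert_identity.
  - apply (qeval_nonneg_cert _ nu (1 / 2) (nu * (5 - 8 * nu) / (4 * (1 - nu))) 0 0 0
             (nu * alpha_mid_curv nu / 2)); repeat cert_coeff.
    cert_identity.
  - apply (qeval_nonneg_cert _ (1 / 2) 1 0 0 (nu / (2 * (1 - nu))) 0 0); repeat cert_coeff.
    cert_identity.
Qed.

Lemma upper_gap_kernel_nonneg :
  (forall s, 0 <= s <= nu -> 0 <= qeval (kl (upper_gap_kernel nu)) s) /\
  (forall s, nu <= s <= 1 / 2 -> 0 <= qeval (km (upper_gap_kernel nu)) s) /\
  (forall s, 1 / 2 <= s <= 1 -> 0 <= qeval (kr (upper_gap_kernel nu)) s).
Proof.
  split; [|split].
  - apply (qeval_nonneg_cert _ 0 nu 0 (nu / (4 * (1 - nu))) 0 ((1 - nu) / (2 * nu)) 0);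
      repeat cert_coeff.
    cert_identity.
  - apply (qeval_nonneg_cert _ nu (1 / 2)
             (nu * (nu - rtilde_closed nu + (1 - nu) / 2) / (1 / 2 - nu))
             (1 / 2 * (1 / 4 + 1 - rtilde_closed nu - nu) / (1 / 2 - nu))
             ((1 - nu) * alpha_mid_curv nu / 2) 0 0); rewrite ?rtilde_closed_eq; repeat cert_coeff.
    cert_identity.
  - apply (qeval_nonneg_cert _ (1 / 2) 1 (1 - rtilde_closed nu - nu) 0 0 0 (1 / 2));
      rewrite ?rtilde_closed_eq; repeat cert_coeff.
    cert_identity.
Qed.

End KernelPositivity.

Lemma ln_bounds_lt_half nu a b : 0 < a -> 0 < b -> a <> b -> 0 < nu < 1 / 2 ->
  0 <= ln_alpha nu a b /\
  nu * ln_alpha nu a b + rtilde_closed nu * ln_Kant a b <= ln_mean_ratio nu a b /\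
  ln_mean_ratio nu a b <= (1 - nu) * ln_alpha nu a b + (1 - rtilde_closed nu) * ln_Kant a b.
Proof.
  intros Ha Hb Hab Hnu.
  rewrite ln_alpha_kint, ln_mean_ratio_kint, (ln_Kant_kint nu) by lra.
  pose proof (kint_comb3 a b nu 1 (green_kernel nu) (- nu) (alpha_kernel nu)
                (- rtilde_closed nu) kant_kernel) as Hlower.
  pose proof (kint_comb3 a b nu (1 - nu) (alpha_kernel nu) (1 - rtilde_closed nu) kant_kernel
                (-1) (green_kernel nu)) as Hupper.
  fold (lower_gap_kernel nu) in Hlower; fold (upper_gap_kernel nu) in Hupper.
  destruct (alpha_kernel_nonneg nu Hnu) as (A1 & A2 & A3).
  destruct (lower_gap_kernel_nonneg nu Hnu) as (L1 & L2 & L3).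
  destruct (upper_gap_kernel_nonneg nu Hnu) as (U1 & U2 & U3).
  pose proof (kint_nonneg a b nu _ Ha Hb Hab Hnu A1 A2 A3).
  pose proof (kint_nonneg a b nu _ Ha Hb Hab Hnu L1 L2 L3).
  pose proof (kint_nonneg a b nu _ Ha Hb Hab Hnu U1 U2 U3).
  lra.
Qed.

Lemma is_RInt_affine (c0 c1 lo hi : R) :
  is_RInt (fun x => c0 + c1 * x) lo hi ((c0 * hi + c1 / 2 * hi ^ 2) - (c0 * lo + c1 / 2 * lo ^ 2)).
Proof.
  apply (is_RInt_derive (fun x => c0 * x + c1 / 2 * x ^ 2)).
  - intros x _; auto_derive; [easy | field].
  - intros x _; apply (@ex_derive_continuous R_AbsRing R_NormedModule); auto_derive; easy.
Qed.

Lemma RInt_two_affine_pieces (f : R -> R) c c0 c1 d0 d1 : 0 < c < 1 ->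
  (forall x, 0 < x < c -> f x = c0 + c1 * x) ->
  (forall x, c < x < 1 -> f x = d0 + d1 * x) ->
  RInt f 0 1 = c0 * c + c1 / 2 * c ^ 2 + (d0 * (1 - c) + d1 / 2 * (1 - c ^ 2)).
Proof.
  intros Hc Hl Hr; apply is_RInt_unique.
  replace (c0 * c + c1 / 2 * c ^ 2 + (d0 * (1 - c) + d1 / 2 * (1 - c ^ 2)))
    with (plus (c0 * c + c1 / 2 * c ^ 2 - (c0 * 0 + c1 / 2 * 0 ^ 2))
               (d0 * 1 + d1 / 2 * 1 ^ 2 - (d0 * c + d1 / 2 * c ^ 2)))
    by (unfold plus; simpl; ring).
  apply (is_RInt_Chasles f 0 c 1); eapply is_RInt_ext; try apply is_RInt_affine;
    intros x Hx; rewrite ?Rmin_left, ?Rmax_right in Hx by lra; symmetry.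
  - apply Hl; lra.
  - apply Hr; lra.
Qed.

Section TildeConstants.

Variable nu : R.
Hypothesis Hnu : 0 < nu < 1 / 2.

Let c := 1 / (2 * (1 - nu)).

Let c_spec : (1 - nu) * c = 1 / 2.
Proof. unfold c; field; lra. Qed.

Let c_bounds : 0 < c < 1.
Proof. split; nra. Qed.

Lemma rtilde_eq : rtilde nu = rtilde_closed nu.
Proof.
  unfold rtilde; rewrite (RInt_two_affine_pieces _ c 0 (2 * nu * (1 - nu)) nu 0).
  - unfold rtilde_closed, c; field; lra.
  - exact c_bounds.
  - intros x Hx; unfold r1, r2; rewrite !Rmin_left by nra; ring.
  - intros x Hx; unfold r1, r2; rewrite Rmin_left, Rmin_right by nra; ring.
Qed.

Lemma Rtilde_eq : Rtilde nu = 1 - rtilde_closed nu.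
Proof.
  unfold Rtilde; rewrite (RInt_two_affine_pieces _ c 1 (- 2 * nu * (1 - nu)) (1 - nu) 0).
  - unfold rtilde_closed, c; field; lra.
  - exact c_bounds.
  - intros x Hx; unfold Defs.R1, Defs.R2; rewrite !Rmax_right by nra; ring.
  - intros x Hx; unfold Defs.R1, Defs.R2; rewrite Rmax_right, Rmax_left by nra; ring.
Qed.

End TildeConstants.

Lemma wam_swap nu a b : wam (1 - nu) b a = wam nu a b.
Proof. unfold wam; ring. Qed.

Lemma ln_alpha_swap nu a b : a <> b -> 0 < nu < 1 -> nu <> 1 / 2 ->
  ln_alpha (1 - nu) b a = ln_alpha nu a b.
Proof.
  intros Hab Hnu Hh; unfold ln_alpha; rewrite wam_swap, (Rplus_comm b a).
  field; repeat split; lra.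
Qed.

Lemma ln_mean_ratio_swap nu a b : ln_mean_ratio (1 - nu) b a = ln_mean_ratio nu a b.
Proof. unfold ln_mean_ratio; rewrite wam_swap; ring. Qed.

Lemma ln_Kant_swap a b : ln_Kant b a = ln_Kant a b.
Proof. unfold ln_Kant; rewrite (Rplus_comm b a); ring. Qed.

Lemma rtilde_swap nu : rtilde (1 - nu) = rtilde nu.
Proof.
  apply RInt_ext; intros x _.
  change ((1 - (1 - nu)) * r1 (1 - nu) x + (1 - nu) * r2 (1 - nu) x
          = (1 - nu) * r1 nu x + nu * r2 nu x).
  unfold r1, r2; replace (1 - (1 - nu)) with nu by ring; ring.
Qed.

Lemma Rtilde_swap nu : Rtilde (1 - nu) = Rtilde nu.
Proof.
  apply RInt_ext; intros x _.
  change ((1 - (1 - nu)) * Defs.R1 (1 - nu) x + (1 - nu) * Defs.R2 (1 - nu) x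
          = (1 - nu) * Defs.R1 nu x + nu * Defs.R2 nu x).
  unfold Defs.R1, Defs.R2; replace (1 - (1 - nu)) with nu by ring; ring.
Qed.

Lemma ln_bounds nu a b : 0 < a -> 0 < b -> a <> b -> 0 < nu < 1 -> nu <> 1 / 2 ->
  0 <= ln_alpha nu a b /\
  Rmin nu (1 - nu) * ln_alpha nu a b + rtilde nu * ln_Kant a b <= ln_mean_ratio nu a b /\
  ln_mean_ratio nu a b <= Rmax nu (1 - nu) * ln_alpha nu a b + Rtilde nu * ln_Kant a b.
Proof.
  intros Ha Hb Hab Hnu Hh; destruct (Rlt_or_le nu (1 / 2)) as [Hlt | Hge].
  - rewrite Rmin_left, Rmax_right, rtilde_eq, Rtilde_eq by lra.
    now apply ln_bounds_lt_half.
  - rewrite Rmin_right, Rmax_left, <- rtilde_swap, <- Rtilde_swap, rtilde_eq, Rtilde_eq by lra.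
    rewrite <- (ln_alpha_swap nu a b), <- (ln_mean_ratio_swap nu a b), <- (ln_Kant_swap a b)
      by lra.
    assert (Hnu' : 0 < 1 - nu < 1 / 2) by lra.
    pose proof (ln_bounds_lt_half (1 - nu) b a Hb Ha (not_eq_sym Hab) Hnu').
    replace (1 - (1 - nu)) with nu in * by ring; assumption.
Qed.

Lemma exp_div x y : exp x / exp y = exp (x - y).
Proof. unfold Rminus, Rdiv; rewrite exp_plus, exp_Ropp; reflexivity. Qed.

Lemma exp_le_compat x y : x <= y -> exp x <= exp y.
Proof. intros [Hlt | ->]; [apply Rlt_le, exp_increasing | apply Rle_refl]; assumption. Qed.

Lemma alpha_eq_exp nu a b : a <> b -> 0 < nu < 1 -> nu <> 1 / 2 ->
  alpha nu a b = exp (ln_alpha nu a b).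
Proof.
  intros Hab Hnu Hh; unfold alpha, Rpower.
  rewrite !exp_div, <- exp_plus, ln_exp; f_equal.
  unfold ln_alpha; field; repeat split; lra.
Qed.

Lemma mean_ratio_eq_exp nu a b : 0 < a -> 0 < b -> 0 < nu < 1 ->
  wam nu a b / wgm nu a b = exp (ln_mean_ratio nu a b).
Proof.
  intros Ha Hb Hnu; unfold wgm, Rpower.
  rewrite <- (exp_ln (wam nu a b)) at 1 by (apply wam_pos; assumption).
  rewrite <- exp_plus, exp_div; f_equal; unfold ln_mean_ratio; ring.
Qed.

Lemma Kant_eq_exp a b : 0 < a -> 0 < b -> Kant a b = exp (ln_Kant a b).
Proof.
  intros Ha Hb; unfold ln_Kant.
  replace (2 * ln ((a + b) / 2) - ln a - ln b)
    with (ln ((a + b) / 2) + ln ((a + b) / 2) - (ln a + ln b)) by ring.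
  rewrite <- exp_div, !exp_plus, !exp_ln by lra.
  unfold Kant; field; lra.
Qed.

Lemma Rpower_alpha_mul_Rpower_Kant nu a b x y :
  0 < a -> 0 < b -> a <> b -> 0 < nu < 1 -> nu <> 1 / 2 ->
  Rpower (alpha nu a b) x * Rpower (Kant a b) y = exp (x * ln_alpha nu a b + y * ln_Kant a b).
Proof.
  intros; rewrite alpha_eq_exp, Kant_eq_exp by assumption.
  unfold Rpower; rewrite !ln_exp, exp_plus; reflexivity.
Qed.

Lemma identric_mul_alpha nu a b : a <> b -> 0 < nu < 1 -> nu <> 1 / 2 ->
  identric nu a b * alpha nu a b =
  / exp 1 *
  Rpower (Rpower a a / Rpower b b
          * (Rpower ((a + b) / 2) (2 * (a + b) / (1 - 2 * nu))
             / Rpower (wam nu a b) (4 * wam nu a b / (1 - 2 * nu))))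
         (1 / (b - a)).
Proof.
  intros Hab Hnu Hh; unfold identric, alpha, Rpower.
  rewrite !exp_div, <- !exp_plus, !ln_exp, !Rmult_assoc, <- !exp_plus.
  do 2 f_equal; field; repeat split; lra.
Qed.

Theorem mainTheorem14 (a b nu : R) :
  0 < a -> 0 < b -> a <> b -> 0 < nu < 1 -> nu <> 1 / 2 ->
  let r := Rmin nu (1 - nu) in
  let Rm := Rmax nu (1 - nu) in
  1 <= alpha nu a b /\
  Rpower (alpha nu a b) r * Rpower (Kant a b) (rtilde nu)
    <= wam nu a b / wgm nu a b /\
  wam nu a b / wgm nu a b
    <= Rpower (alpha nu a b) Rm * Rpower (Kant a b) (Rtilde nu) /\
  identric nu a b <=
    / exp 1 *
    Rpower
      (Rpower a a / Rpower b b
       * (Rpower ((a + b) / 2) (2 * (a + b) / (1 - 2 * nu))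
          / Rpower (wam nu a b) (4 * wam nu a b / (1 - 2 * nu))))
      (1 / (b - a)).
Proof.
  intros Ha Hb Hab Hnu Hh r Rm; subst r Rm.
  destruct (ln_bounds nu a b Ha Hb Hab Hnu Hh) as (Halpha & Hlower & Hupper).
  assert (Halpha1 : 1 <= alpha nu a b)
    by (rewrite alpha_eq_exp, <- exp_0 by assumption; apply exp_le_compat, Halpha).
  repeat split.
  - exact Halpha1.
  - rewrite Rpower_alpha_mul_Rpower_Kant, mean_ratio_eq_exp by assumption.
    apply exp_le_compat, Hlower.
  - rewrite Rpower_alpha_mul_Rpower_Kant, mean_ratio_eq_exp by assumption.
    apply exp_le_compat, Hupper.
  - rewrite <- identric_mul_alpha by assumption.
    assert (0 < identric nu a b)
      by (unfold identric, Rpower; repeat apply Rmult_lt_0_compat;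
          auto using Rinv_0_lt_compat, exp_pos).
    nra.
Qed.
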